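(* Let $\mathcal W$ be a finite set of arms, $(Y_t(w))_{w\in\mathcal W}$, $t=1,2,\dots$, i.i.d. vectors of potential outcomes with nonzero variance and finite $(2+\delta)$-th moments for some $\delta>0$, $W_t$ assigned with known strictly positive probabilities $e_t(w)=\mathbb P[W_t=w\mid H^{t-1}]$ (the conditional law of $W_t$ given $H^{t-1}$ and current and future potential outcomes depending only on $H^{t-1}$), $Y_t=Y_t(W_t)$, $H^{t-1}=\{(W_s,Y_s)\}_{s<t}$. Fix $w$ and suppose $e_t(w)\ge Ct^{-\alpha}$ for all $t$, for some $\alpha\in[0,1)$ and $C>0$. For each horizon $T$, let $\lambda_t(w)$, $t=1,\dots,T$, be $H^{t-1}$-measurable allocation rates with $\lambda_t(w)<1$ for $t<T$, $\lambda_T(w)=1$, and, for a finite positive constant $C'$, $$\frac{1}{T-t+1}\le\lambda_t(w)\le C'\,\frac{e_t(w)}{t^{-\alpha}+T^{1-\alpha}-t^{1-\alpha}}.$$ Define nonnegative weights $h_t(w)$ recursively by $$\frac{h_t^2(w)}{e_t(w)}=\Big(1-\sum_{s=1}^{t-1}\frac{h_s^2(w)}{e_s(w)}\Big)\lambda_t(w).$$ Then the $h_t(w)$ are $H^{t-1}$-measurable and satisfy: (i) $\big(\sum_{t=1}^T h_t(w)\big)^2\big/\mathbb E\big[\sum_{t=1}^T h_t^2(w)/e_t(w)\big]\to\infty$ in probability; (ii) for some $p>1$, $\sum_{t=1}^T \frac{h_t^2(w)}{e_t(w)}\big/\mathbb E\big[\sum_{t=1}^T\frac{h_t^2(w)}{e_t(w)}\big]\to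 1$ in $L_p$; (iii) for some $\delta>0$, $\sum_{t=1}^T \frac{h_t^{2+\delta}(w)}{e_t^{1+\delta}(w)}\big/\mathbb E\big[\sum_{t=1}^T\frac{h_t^2(w)}{e_t(w)}\big]^{1+\delta/2}\to 0$ in probability; all as $T\to\infty$.
   Context: $H^{t-1}$-measurable means a function of the observed arms and outcomes up to time $t-1$. The weights and allocation rates depend on the horizon $T$. *)

From HB Require Import structures.
From mathcomp Require Import all_boot all_order all_algebra.
From mathcomp Require Import all_classical all_reals all_analysis.
Set Implicit Arguments. Unset Strict Implicit. Unset Printing Implicit Defensive.
Import Order.TTheory GRing.Theory Num.Theory.
Import numFieldNormedType.Exports.
Local Open Scope classical_set_scope.
Local Open Scope ring_scope.

(* Times are t = 1, 2, ...; the value at index 0 is never used. *)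

Section Defs.
Context {R : realType} {d : measure_display} {Omega : measurableType d}
  {K : finType}.

Definition gen_sigma (G : set (set Omega)) : set (set Omega) :=
  <<s G >>.

Definition measurable_wrt (F : set (set Omega)) (f : Omega -> R) : Prop :=
  forall B : set R, measurable B -> F (f @^-1` B).

(* generators of H^{t-1} = sigma((W_s, Y_s(W_s)), 1 <= s < t) *)
Definition hist_gen (W : nat -> Omega -> K) (Y : nat -> K -> Omega -> R)
  (t : nat) : set (set Omega) :=
  [set A | exists s, (0 < s < t)%N /\
     ((exists S : set K, A = W s @^-1` S) \/
      (exists B : set R, measurable B /\ A = (fun x => Y s (W s x) x) @^-1` B))].

Definition hist W Y t := gen_sigma (hist_gen W Y t).

Definition hist_future_gen (W : nat -> Omega -> K) (Y : nat -> K -> Omega -> R)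
  (t : nat) : set (set Omega) :=
  hist_gen W Y t `|`
  [set A | exists s v B, (t <= s)%N /\ measurable B /\ A = Y s v @^-1` B].

Definition vec_sigma (Y : nat -> K -> Omega -> R) (t : nat) : set (set Omega) :=
  gen_sigma [set A | exists v B, measurable B /\ A = Y t v @^-1` B].

Definition indep_vectors (P : probability Omega R) (Y : nat -> K -> Omega -> R)
  : Prop :=
  forall (s : seq nat) (A : nat -> set Omega), uniq s ->
    (forall t, t \in s -> (0 < t)%N /\ vec_sigma Y t (A t)) ->
    fine (P (\bigcap_(t in [set t | t \in s]) A t)) =
    \prod_(t <- s) fine (P (A t)).

Definition ident_distr (P : probability Omega R) (Y : nat -> K -> Omega -> R)
  : Prop :=
  forall (t : nat) (B : K -> set R), (0 < t)%N -> (forall v, measurable (B v)) ->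
    P (\bigcap_(v in setT) (Y t v @^-1` B v)) =
    P (\bigcap_(v in setT) (Y 1%N v @^-1` B v)).

Definition Exp (P : probability Omega R) (X : Omega -> R) : R :=
  fine (\int[P]_x (X x)%:E).

Definition Var (P : probability Omega R) (X : Omega -> R) : R :=
  Exp P (fun x => (X x - Exp P X) ^+ 2).

End Defs.

(* Writing [q_t = h_t^2 / e_t], the recursion is a stick-breaking scheme: step [t]
   takes the fraction [lam_t] of the remainder [1 - sum_(s < t) q_s], and
   [lam_T = 1] uses up the whole stick.  Since [lam_s >= 1/(T-s+1)]
   the remainder at [t] is at most [(T-t+1)/T]; together with the upper bound on
   [lam_t] and the concavity of [x^(1-alpha)] this gives [q_t <= r_T e_t] with
   [r_T = C'/((1-alpha) T^(1-alpha)) -> 0].  Then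
   [1 = sum_t h_t (h_t / e_t) <= sqrt r_T sum_t h_t] gives (i), and
   [sum_t h_t^4 / e_t^3 = sum_t q_t (q_t / e_t) <= r_T] gives (iii) with delta 2.
   Predictability follows from the closed form
   [h_t = sqrt (e_t lam_t prod_(s < t) (1 - lam_s))]. *)

From HB Require Import structures.
From mathcomp Require Import all_boot all_order all_algebra.
From mathcomp Require Import all_classical all_reals all_analysis.
From mathcomp Require Import measurable_realfun.
From mathcomp Require Import ring lra.
Set Implicit Arguments. Unset Strict Implicit. Unset Printing Implicit Defensive.
Import Order.TTheory GRing.Theory Num.Theory.
Import numFieldNormedType.Exports.
Local Open Scope classical_set_scope.
Local Open Scope ring_scope.

Section PowerInequalities.
Variable R : realType.
Implicit Types a x y : R.

Lemma powR_weighted_amgm a x y : 0 <= a <= 1 -> 0 <= x -> 0 <= y ->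
  x `^ (1 - a) * y `^ a <= (1 - a) * x + a * y.
Proof.
move=> /andP[a0 a1] x0 y0.
have [->|a_neq0] := eqVneq a 0.
  by rewrite subr0 powRr1 // powRr0 mulr1 mul1r mul0r addr0.
have [->|a_neq1] := eqVneq a 1.
  by rewrite subrr powRr0 powRr1 // mul1r mul0r add0r.
have a_gt0 : 0 < a by rewrite lt0r a_neq0.
have b_gt0 : 0 < 1 - a by rewrite subr_gt0 lt_neqAle a_neq1.
have ia_gt0 : 0 < a^-1 by rewrite invr_gt0.
have ib_gt0 : 0 < (1 - a)^-1 by rewrite invr_gt0.
have := conjugate_powR (powR_ge0 x (1 - a)) (powR_ge0 y a) ib_gt0 ia_gt0.
rewrite !invrK subrK -!powRrM !mulfV ?gt_eqF // !powRr1 // => /(_ erefl).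
by rewrite [x * _]mulrC [y * _]mulrC.
Qed.

Lemma powR_concave_tangent a x y : 0 <= a <= 1 -> 0 <= x -> 0 < y ->
  (1 - a) * y `^ (- a) * (y - x) <= y `^ (1 - a) - x `^ (1 - a).
Proof.
move=> a01 x0 y0.
have yNa_gt0 : 0 < y `^ (- a) := powR_gt0 _ y0.
have y1a : y `^ (1 - a) = y * y `^ (- a).
  by rewrite powRD ?(gt_eqF y0) ?implybT // powRr1 // ltW.
have amgm : x `^ (1 - a) <= ((1 - a) * x + a * y) * y `^ (- a).
  rewrite -(ler_pM2r (powR_gt0 a y0)) -mulrA powRN mulVf ?gt_eqF ?powR_gt0 //.
  by rewrite mulr1 powR_weighted_amgm // ltW.
rewrite y1a; nra.
Qed.

Lemma powR_gap_ge a x y : 0 <= a <= 1 -> 0 < x <= y ->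
  (1 - a) * y `^ (- a) * (y - x + 1) <=
  x `^ (- a) + y `^ (1 - a) - x `^ (1 - a).
Proof.
move=> a01 /andP[x0 xy].
have tangent := powR_concave_tangent a01 (ltW x0) (lt_le_trans x0 xy).
case/andP: a01 => a0 a1.
have yx : y `^ (- a) <= x `^ (- a).
  rewrite !powRN lef_pV2 ?posrE ?powR_gt0 //; last exact: lt_le_trans xy.
  have y0 := lt_le_trans x0 xy.
  by apply: ge0_ler_powR => //; rewrite nnegrE ltW.
have : 0 <= a * y `^ (- a) by rewrite mulr_ge0 ?powR_ge0.
lra.
Qed.

Lemma powR_gap_ratio_le a x y : 0 <= a < 1 -> 0 < x <= y ->
  (y - x + 1) / (y * (x `^ (- a) + y `^ (1 - a) - x `^ (1 - a))) <=
  ((1 - a) * y `^ (1 - a))^-1.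
Proof.
move=> /andP[a_ge0 a_lt1] /[dup] xy /andP[x_gt0 x_le_y].
have y_gt0 := lt_le_trans x_gt0 x_le_y.
have b_gt0 : 0 < 1 - a by rewrite subr_gt0.
have a01 : 0 <= a <= 1 by rewrite a_ge0 ltW.
have gap := powR_gap_ge a01 xy.
have X_gt0 : 0 < (1 - a) * y `^ (- a) * (y - x + 1).
  by rewrite !mulr_gt0 ?powR_gt0 // ltr_wpDl // subr_ge0.
have y1a : y `^ (1 - a) = y * y `^ (- a).
  by rewrite powRD ?(gt_eqF y_gt0) ?implybT // powRr1 // ltW.
have c_gt0 : 0 < (1 - a) * y `^ (1 - a) by rewrite mulr_gt0 ?powR_gt0.
have D_gt0 : 0 < x `^ (- a) + y `^ (1 - a) - x `^ (1 - a) := lt_le_trans X_gt0 gap.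
rewrite ler_pdivrMr ?mulr_gt0 // -(ler_pM2l c_gt0) mulrA mulfV ?gt_eqF // mul1r.
have -> : (1 - a) * y `^ (1 - a) * (y - x + 1) =
  y * ((1 - a) * y `^ (- a) * (y - x + 1)) by rewrite y1a; ring.
by apply: ler_wpM2l; [exact: ltW | exact: gap].
Qed.

Lemma nbhs_infty_powR_gt (b K : R) : 0 < b -> \forall n \near \oo, K < n%:R `^ b.
Proof.
move=> b_gt0; pose K' := Num.max K 0 + 1.
have K'_gt0 : 0 < K' by rewrite /K' ltr_wpDl // le_max lexx orbT.
near=> n.
have n_ge : K' `^ b^-1 <= n%:R by near: n; exact: nbhs_infty_ger.
rewrite (@lt_le_trans _ _ K') //; first by rewrite /K' ltr_pwDr // le_max lexx.
have -> : K' = (K' `^ b^-1) `^ b by rewrite -powRrM mulVf ?lt0r_neq0 ?powRr1 ?ltW.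
apply: ge0_ler_powR; rewrite ?nnegrE ?powR_ge0 // ltW.
Unshelve. all: by end_near.
Qed.

End PowerInequalities.

Definition stick_rate (R : realType) (a C' : R) (T : nat) : R :=
  C' / ((1 - a) * T%:R `^ (1 - a)).

Lemma stick_rate_ge0 (R : realType) (a C' : R) T : a <= 1 -> 0 <= C' ->
  0 <= stick_rate a C' T.
Proof. by move=> a_le1 C'_ge0; rewrite divr_ge0 ?mulr_ge0 ?powR_ge0 ?subr_ge0. Qed.

Lemma stick_rate_cvg0 (R : realType) (a C' : R) : a < 1 ->
  stick_rate a C' T @[T --> \oo] --> 0.
Proof.
move=> a_lt1; apply/cvgr0Pnorm_lt => c c_gt0.
have b_gt0 : 0 < 1 - a by rewrite subr_gt0.
near=> T.
have : `|C'| / (c * (1 - a)) < T%:R `^ (1 - a) by near: T; exact: nbhs_infty_powR_gt.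
rewrite ltr_pdivrMr ?mulr_gt0 // mulrC -mulrA => C'_lt.
have D_gt0 : 0 < (1 - a) * T%:R `^ (1 - a).
  by rewrite -(pmulr_rgt0 _ c_gt0) (le_lt_trans _ C'_lt).
by rewrite /stick_rate normf_div (gtr0_norm D_gt0) ltr_pdivrMr.
Unshelve. all: by end_near.
Qed.

Section StickBreaking.
Variables (R : realType) (T : nat) (q L : nat -> R).
Hypothesis q_rec : forall t, (0 < t <= T)%N ->
  q t = (1 - \sum_(1 <= s < t) q s) * L t.

Lemma stick_remainderE t : (t <= T.+1)%N ->
  1 - \sum_(1 <= s < t) q s = \prod_(1 <= s < t) (1 - L s).
Proof.
elim: t => [|t IH] tT; first by rewrite !big_geq // subr0.
case: t IH tT => [|t] IH tT; first by rewrite !big_geq // subr0.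
rewrite big_nat_recr // [RHS]big_nat_recr //= (@q_rec t.+1) // -IH; last exact: ltnW.
ring.
Qed.

Lemma stick_sum_eq1 : (0 < T)%N -> L T = 1 -> \sum_(1 <= t < T.+1) q t = 1.
Proof.
move=> T_gt0 LT1; apply/eqP; rewrite eq_sym -subr_eq0.
by rewrite stick_remainderE // big_nat_recr //= LT1 subrr mulr0.
Qed.

Lemma stick_weightE t : (0 < t <= T)%N -> q t = L t * \prod_(1 <= s < t) (1 - L s).
Proof.
move=> /[dup] ht /andP[_ tT].
by rewrite q_rec // stick_remainderE ?(leqW tT) // mulrC.
Qed.

Hypothesis L_le1 : forall t, (0 < t < T)%N -> L t <= 1.
Hypothesis L_ge : forall t, (0 < t <= T)%N -> 1 / (T%:R - t%:R + 1) <= L t.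

Lemma stick_remainder_ge0 t : (t <= T)%N -> 0 <= 1 - \sum_(1 <= s < t) q s.
Proof.
move=> tT; rewrite stick_remainderE ?(leqW tT) // big_nat_cond.
apply: prodr_ge0 => s /andP[/andP[s_gt0 st] _].
by rewrite subr_ge0 L_le1 // s_gt0 (leq_trans st).
Qed.

Lemma stick_remainder_le t : (0 < t <= T)%N ->
  1 - \sum_(1 <= s < t) q s <= (T%:R - t%:R + 1) / T%:R.
Proof.
elim: t => [//|[|t] IH] /andP[_ tT].
  by rewrite big_geq // subr0 subrK divff // pnatr_eq0 -lt0n.
have T_gt0 : (0 < T%:R :> R) by rewrite ltr0n (leq_trans _ tT).
have tT' : t.+1%:R + 1 <= T%:R :> R by rewrite natr1 ler_nat.
pose u : R := T%:R - t.+1%:R + 1.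
have u_gt0 : 0 < u by rewrite /u; lra.
have uL : 1 <= u * L t.+1.
  by rewrite -ler_pdivrMl // mulr1 -div1r; apply: L_ge; exact: ltnW.
have L1 : 0 <= 1 - L t.+1 by rewrite subr_ge0 L_le1.
rewrite big_nat_recr //= opprD addrA (@q_rec t.+1); last exact: ltnW.
set r := 1 - _.
have step1 : r * (1 - L t.+1) <= u / T%:R * (1 - L t.+1).
  by apply: ler_wpM2r => //; apply: IH; exact: ltnW.
have step2 : u / T%:R * (1 - L t.+1) <= (u - 1) / T%:R.
  by rewrite mulrAC; apply: ler_wpM2r; [rewrite invr_ge0 ltW | lra].
have := le_trans step1 step2; rewrite /u -natr1; lra.
Qed.

Variables (a C' : R) (e : nat -> R).
Hypothesis a01 : 0 <= a < 1.
Hypothesis L_le_rate : forall t, (0 < t <= T)%N ->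
  L t <= C' * (e t / (t%:R `^ (- a) + T%:R `^ (1 - a) - t%:R `^ (1 - a))).

Lemma stick_weight_le t : (0 < t <= T)%N -> q t <= stick_rate a C' T * e t.
Proof.
move=> ht; have /andP[t_gt0 tT] := ht; have /andP[a_ge0 a_lt1] := a01.
have T_gt0 : 0 < T%:R :> R by rewrite ltr0n (leq_trans t_gt0 tT).
have txy : 0 < (t%:R : R) <= T%:R by rewrite ltr0n t_gt0 ler_nat.
have := L_le_rate ht; set D := _ + _ - _ => LD.
have D_gt0 : 0 < D.
  apply: lt_le_trans (powR_gap_ge _ txy); last by rewrite a_ge0 ltW.
  by rewrite !mulr_gt0 ?powR_gt0 ?subr_gt0 // ltr_wpDl // subr_ge0; case/andP: txy.
have L_ge0 : 0 <= L t.
  by apply: le_trans (L_ge ht); rewrite divr_ge0 // addr_ge0 // subr_ge0 ler_nat.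
have Ce_ge0 : 0 <= C' * e t.
  by have := le_trans L_ge0 LD; rewrite mulrA pmulr_lge0 ?invr_gt0.
rewrite q_rec //; apply: le_trans (ler_pM (stick_remainder_ge0 tT) L_ge0
  (stick_remainder_le ht) LD) _.
have -> : (T%:R - t%:R + 1) / T%:R * (C' * (e t / D)) =
  C' * e t * ((T%:R - t%:R + 1) / (T%:R * D)) by field; rewrite !gt_eqF.
rewrite /stick_rate [leRHS]mulrAC; apply: ler_wpM2l => //.
exact: powR_gap_ratio_le.
Qed.

End StickBreaking.

Section WeightSums.
Variables (R : realType) (I : eqType) (r : seq I) (h e : I -> R) (eps : R).
Hypothesis h_ge0 : {in r, forall i, 0 <= h i}.
Hypothesis e_gt0 : {in r, forall i, 0 < e i}.
Hypothesis sqr_div_le : {in r, forall i, h i ^+ 2 / e i <= eps * e i}.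

Lemma sum_sqr_div_le_sqrt_mul_sum :
  \sum_(i <- r) h i ^+ 2 / e i <= Num.sqrt eps * \sum_(i <- r) h i.
Proof.
rewrite mulr_sumr big_seq [X in _ <= X]big_seq; apply: ler_sum => i ri.
have he_ge0 : 0 <= h i / e i := divr_ge0 (h_ge0 ri) (ltW (e_gt0 ri)).
have he_le : h i / e i <= Num.sqrt eps.
  rewrite -(ger0_norm he_ge0) -sqrtr_sqr; apply: ler_wsqrtr.
  by rewrite expr_div_n [e i ^+ 2]expr2 invfM mulrA ler_pdivrMr ?e_gt0 ?sqr_div_le.
rewrite expr2 -mulrA [X in _ <= X]mulrC.
by apply: ler_wpM2l; [exact: h_ge0 | exact: he_le].
Qed.

Lemma sum_pow4_div_le_mul_sum :
  \sum_(i <- r) h i ^+ 4 / e i ^+ 3 <= eps * \sum_(i <- r) h i ^+ 2 / e i.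
Proof.
rewrite mulr_sumr big_seq [X in _ <= X]big_seq; apply: ler_sum => i ri.
have e_neq0 : e i != 0 by rewrite gt_eqF ?e_gt0.
have -> : h i ^+ 4 / e i ^+ 3 = (h i ^+ 2 / e i) / e i * (h i ^+ 2 / e i).
  by field.
rewrite mulrC [X in _ <= X]mulrC.
apply: ler_wpM2l; first exact: divr_ge0 (sqr_ge0 _) (ltW (e_gt0 ri)).
by rewrite ler_pdivrMr ?e_gt0 // sqr_div_le.
Qed.

End WeightSums.

Section HistoryMeasurability.
Context {R : realType} {d : measure_display} {Omega : measurableType d}.

Lemma measurable_wrtP (G : set (set Omega)) (f : Omega -> R) :
  measurable_wrt (gen_sigma G) f <->
  measurable_fun (setT : set (g_sigma_algebraType G)) f.
Proof.
split=> [mf _ B mB | mf B mB]; first by rewrite setTI; exact: mf.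
by have := mf measurableT B mB; rewrite setTI.
Qed.

Variables (K : finType) (W : nat -> Omega -> K) (Y : nat -> K -> Omega -> R).

Lemma hist_gen_mono s t : (s <= t)%N -> hist_gen W Y s `<=` hist_gen W Y t.
Proof.
move=> st A [u [/andP[u_gt0 us] HA]]; exists u; split => //.
by rewrite u_gt0 (leq_trans us).
Qed.

Lemma measurable_wrt_hist_mono s t (f : Omega -> R) : (s <= t)%N ->
  measurable_wrt (hist W Y s) f -> measurable_wrt (hist W Y t) f.
Proof.
rewrite /hist /gen_sigma => st mf B mB.
apply: (sub_smallest2r _ (hist_gen_mono st) (mf B mB)).
exact: smallest_sigma_algebra.
Qed.

Lemma measurable_wrt_hist_stick_weight t (L : nat -> Omega -> R) (e : Omega -> R) :
  (0 < t)%N -> (forall s, (0 < s <= t)%N -> measurable_wrt (hist W Y s) (L s)) ->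
  measurable_wrt (hist W Y t) e ->
  measurable_wrt (hist W Y t)
    (fun x => Num.sqrt (e x * (L t x * \prod_(1 <= s < t) (1 - L s x)))).
Proof.
move=> t_gt0 mL /measurable_wrtP me; apply/measurable_wrtP.
have mLt s : (0 < s <= t)%N ->
    measurable_fun (setT : set (g_sigma_algebraType (hist_gen W Y t))) (L s).
  by move=> /[dup] /andP[_ st] /mL /(measurable_wrt_hist_mono st) /measurable_wrtP.
apply: measurableT_comp; first exact: continuous_measurable_fun (@sqrt_continuous R).
apply: measurable_funM => //.
apply: measurable_funM; first by apply: mLt; apply/andP.
apply: measurable_prod => s; rewrite mem_index_iota => /andP[s_gt0 st].
by apply: measurable_funB; [exact: measurable_cst | apply: mLt; rewrite s_gt0 ltnW].
Qed.

End HistoryMeasurability.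

Lemma fine_measure_near_set0_cvg0 d (T : measurableType d) (R : realType)
    (mu : {measure set T -> \bar R}) (A : nat -> set T) :
  (\forall n \near \oo, A n = set0) -> fine (mu (A n)) @[n --> \oo] --> 0.
Proof.
by move=> A0; apply: cvg_near_cst; apply: filterS A0 => n ->; rewrite measure0.
Qed.

Section AdaptiveWeights.
Variables (R : realType) (Omega K : Type) (w : K) (alpha C' : R).
Variables (e : nat -> K -> Omega -> R) (lam h : nat -> nat -> Omega -> R).
Hypothesis alpha01 : 0 <= alpha < 1.
Hypothesis C'_gt0 : 0 < C'.
Hypothesis e_gt0 : forall t v x, 0 < e t v x.
Hypothesis lam_lt1 : forall T t x, (0 < t < T)%N -> lam T t x < 1.
Hypothesis lamT1 : forall T x, (0 < T)%N -> lam T T x = 1.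
Hypothesis lam_bounds : forall T t x, (0 < t <= T)%N ->
  1 / ((T - t)%:R + 1) <= lam T t x /\
  lam T t x <= C' * (e t w x /
    (t%:R `^ (- alpha) + T%:R `^ (1 - alpha) - t%:R `^ (1 - alpha))).
Hypothesis h_ge0 : forall T t x, 0 <= h T t x.
Hypothesis h_rec : forall T t x, (0 < t <= T)%N ->
  h T t x ^+ 2 / e t w x =
  (1 - \sum_(1 <= s < t) h T s x ^+ 2 / e s w x) * lam T t x.

Let q_rec T x : forall t, (0 < t <= T)%N -> _ := fun t => @h_rec T t x.

Let rate_ge0 T : 0 <= stick_rate alpha C' T.
Proof. by apply: stick_rate_ge0; [case/andP: alpha01 => _ /ltW | exact: ltW]. Qed.

Lemma weights_sqr_sum_eq1 T x : (0 < T)%N ->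
  \sum_(1 <= t < T.+1) h T t x ^+ 2 / e t w x = 1.
Proof. by move=> T_gt0; rewrite (stick_sum_eq1 (@q_rec T x)) ?lamT1. Qed.

Lemma weights_sqr_div_le T t x : (0 < t <= T)%N ->
  h T t x ^+ 2 / e t w x <= stick_rate alpha C' T * e t w x.
Proof.
move=> ht; apply: (stick_weight_le (@q_rec T x) _ _ (C' := C') (e := e ^~ w ^~ x)
  alpha01 _ ht) => [s hs|s hs|s hs].
- by rewrite ltW ?lam_lt1.
- by have /andP[_ sT] := hs; rewrite -natrB //; case: (lam_bounds x hs).
- by case: (lam_bounds x hs).
Qed.

Lemma weights_sqr_div_le_in T x :
  {in index_iota 1 T.+1,
    forall t, h T t x ^+ 2 / e t w x <= stick_rate alpha C' T * e t w x}.
Proof. by move=> t; rewrite mem_index_iota; exact: weights_sqr_div_le. Qed.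

Lemma weights_sum_sqr_ge T x : (0 < T)%N ->
  1 <= stick_rate alpha C' T * (\sum_(1 <= t < T.+1) h T t x) ^+ 2.
Proof.
move=> T_gt0; have := sum_sqr_div_le_sqrt_mul_sum (fun t _ => @h_ge0 T t x)
  (fun t _ => @e_gt0 t w x) (@weights_sqr_div_le_in T x).
rewrite weights_sqr_sum_eq1 // => sum_ge1.
by rewrite -(sqr_sqrtr (rate_ge0 T)) -exprMn exprn_ege1.
Qed.

Lemma weights_sum_sqr_near_gt M :
  \forall T \near \oo, forall x, M < (\sum_(1 <= t < T.+1) h T t x) ^+ 2.
Proof.
have rateM : stick_rate alpha C' T * M @[T --> \oo] --> 0.
  rewrite -[X in _ --> X](mul0r M); apply: cvgM; last exact: cvg_cst.
  by apply: stick_rate_cvg0; case/andP: alpha01.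
near=> T => x; have T_gt0 : (0 < T)%N by near: T; exact: nbhs_infty_ge.
have rateM_lt1 : stick_rate alpha C' T * M < 1 by near: T; exact: cvgr_lt rateM _ ltr01.
have := weights_sum_sqr_ge x T_gt0; have := rate_ge0 T; nra.
Unshelve. all: by end_near.
Qed.

Lemma weights_pow4_sum_near_lt eps : 0 < eps ->
  \forall T \near \oo, forall x, \sum_(1 <= t < T.+1) h T t x ^+ 4 / e t w x ^+ 3 < eps.
Proof.
move=> eps_gt0; have rate_cvg0 : stick_rate alpha C' T @[T --> \oo] --> 0.
  by apply: stick_rate_cvg0; case/andP: alpha01.
near=> T => x; have T_gt0 : (0 < T)%N by near: T; exact: nbhs_infty_ge.
have rate_lt : stick_rate alpha C' T < eps by near: T; exact: cvgr_lt rate_cvg0 _ eps_gt0.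
have := sum_pow4_div_le_mul_sum (fun t _ => @e_gt0 t w x) (@weights_sqr_div_le_in T x).
by rewrite weights_sqr_sum_eq1 // mulr1 => /le_lt_trans; apply.
Unshelve. all: by end_near.
Qed.

Lemma weightsE T t x : (0 < t <= T)%N ->
  h T t x = Num.sqrt (e t w x * (lam T t x * \prod_(1 <= s < t) (1 - lam T s x))).
Proof.
move=> ht; rewrite -(stick_weightE (@q_rec T x)) // mulrC divfK ?gt_eqF //.
by rewrite sqrtr_sqr ger0_norm.
Qed.

End AdaptiveWeights.

Theorem theorem2 (R : realType) (d : measure_display) (Omega : measurableType d)
  (P : probability Omega R) (K : finType)
  (Y : nat -> K -> Omega -> R) (W : nat -> Omega -> K)
  (e : nat -> K -> Omega -> R)
  (dlt0 : R) (w : K) (alpha C C' : R)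
  (lam : nat -> nat -> Omega -> R) (h : nat -> nat -> Omega -> R) :
  (* potential outcomes: measurable, i.i.d. vectors, nonzero variance,
     finite (2 + dlt0)-th moments *)
  (forall t v, measurable_fun setT (Y t v)) ->
  indep_vectors P Y -> ident_distr P Y ->
  (forall v, Var P (Y 1%N v) != 0) ->
  0 < dlt0 ->
  (forall v, (\int[P]_x ((`|Y 1%N v x| `^ (2 + dlt0))%:E) < +oo)%E) ->
  (* assignments and their known, strictly positive propensities *)
  (forall t (S : set K), measurable (W t @^-1` S)) ->
  (forall t v x, 0 < e t v x) ->
  (forall t v, (0 < t)%N -> measurable_wrt (hist W Y t) (e t v)) ->
  (forall t v A, (0 < t)%N -> gen_sigma (hist_future_gen W Y t) A ->
     (P (A `&` (W t @^-1` [set v])) = \int[P]_(x in A) (e t v x)%:E)%E) ->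
  (* lower bound on the propensity of arm w *)
  0 <= alpha < 1 -> 0 < C ->
  (forall t x, (0 < t)%N -> C * (t%:R `^ (- alpha)) <= e t w x) ->
  (* allocation rates lam T t, for each horizon T *)
  0 < C' ->
  (forall T t, (0 < t <= T)%N -> measurable_wrt (hist W Y t) (lam T t)) ->
  (forall T t x, (0 < t < T)%N -> lam T t x < 1) ->
  (forall T x, (0 < T)%N -> lam T T x = 1) ->
  (forall T t x, (0 < t <= T)%N ->
     1 / ((T - t)%:R + 1) <= lam T t x /\
     lam T t x <= C' * (e t w x /
        (t%:R `^ (- alpha) + T%:R `^ (1 - alpha) - t%:R `^ (1 - alpha)))) ->
  (* nonnegative weights defined by the recursion *)
  (forall T t x, 0 <= h T t x) ->
  (forall T t x, (0 < t <= T)%N ->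
     h T t x ^+ 2 / e t w x =
     (1 - \sum_(1 <= s < t) h T s x ^+ 2 / e s w x) * lam T t x) ->
  let V T x := \sum_(1 <= t < T.+1) h T t x ^+ 2 / e t w x in
  let EV T := fine (\int[P]_x (V T x)%:E) in
  (forall T t, (0 < t <= T)%N -> measurable_wrt (hist W Y t) (h T t)) /\
  (* (i) *)
  (forall M : R,
     (fun T => fine (P [set x | (\sum_(1 <= t < T.+1) h T t x) ^+ 2 / EV T <= M]))
       @ \oo --> 0) /\
  (* (ii) *)
  (exists p : R, 1 < p /\
     (fun T => (\int[P]_x ((`|V T x / EV T - 1| `^ p)%:E))%E) @ \oo --> 0%E) /\
  (* (iii) *)
  (exists dlt : R, 0 < dlt /\
     forall eps : R, 0 < eps ->
     (fun T => fine (P [set x | eps <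
        `|(\sum_(1 <= t < T.+1) h T t x `^ (2 + dlt) / e t w x `^ (1 + dlt))
          / EV T `^ (1 + dlt / 2)|])) @ \oo --> 0).
Proof.
move=> _ _ _ _ _ _ _ e_gt0 e_meas _ alpha01 _ _ C'_gt0 lam_meas lam_lt1 lamT1
  lam_bounds h_ge0 h_rec V EV.
have V1 T x : (0 < T)%N -> V T x = 1 by exact: (weights_sqr_sum_eq1 lamT1 h_rec).
have EV1 T : (0 < T)%N -> EV T = 1.
  move=> T_gt0; rewrite /EV (eq_integral (cst 1%E)) => [|x _]; last by rewrite V1.
  by rewrite integral_cst //= probability_setT mul1e.
split.
  move=> T t /[dup] ht /andP[t_gt0 tT].
  rewrite (funext (fun x => weightsE e_gt0 h_ge0 h_rec x ht)).
  apply: measurable_wrt_hist_stick_weight => // [s /andP[s_gt0 st]|].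
    by apply: lam_meas; rewrite s_gt0 (leq_trans st).
  exact: e_meas.
split.
  move=> M; apply: fine_measure_near_set0_cvg0.
  have := weights_sum_sqr_near_gt alpha01 C'_gt0 e_gt0 lam_lt1 lamT1 lam_bounds h_ge0
    h_rec M.
  apply: filterS2 (nbhs_infty_ge 1) => T T_gt0 sum_gt.
  by apply/seteqP; split=> // x /=; rewrite EV1 // divr1 leNgt sum_gt.
split.
  exists 2; split; first lra.
  apply: cvg_near_cst; apply: filterS (nbhs_infty_ge 1) => T T_gt0.
  rewrite (eq_integral (cst 0%E)) ?integral0 // => x _.
  by rewrite V1 // EV1 // divr1 subrr normr0 powR0.
exists 2; split=> [|eps eps_gt0]; first lra.
apply: fine_measure_near_set0_cvg0.
have := weights_pow4_sum_near_lt alpha01 e_gt0 lam_lt1 lamT1 lam_bounds h_rec eps_gt0.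
apply: filterS2 (nbhs_infty_ge 1) => T T_gt0 sum_lt.
apply/seteqP; split=> // x /=; rewrite EV1 // powR1 divr1.
rewrite (eq_bigr (fun t => h T t x ^+ 4 / e t w x ^+ 3)) => [|t _]; last first.
  rewrite -!powR_mulrn ?h_ge0 ?(ltW (e_gt0 t w x)) //.
  by congr (_ `^ _ / _ `^ _); lra.
rewrite ger0_norm ?ltNge ?(ltW (sum_lt x)) //.
by apply: sumr_ge0 => t _; rewrite divr_ge0 ?exprn_ge0 ?h_ge0 ?(ltW (e_gt0 t w x)).
Qed.
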